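(* Let $G$ be a graph and $k\ge1$. Then $M_k(G)$ is a trivial matroid if and only if $G$ has no subgraph $F$ such that $F$ is a cacti-graph and $\Delta F=k$.
   Context: Graphs are finite, may have loops and parallel edges, and have no isolated vertices. A leaf is a vertex incident to exactly one edge, which is not a loop. $\Delta H=|E(H)|-|V(H)|$. A cacti-graph is a graph with no isolated vertices, no leaves, and no component that is a cycle. For $X\subseteq E(G)$, $G\langle X\rangle$ is the subgraph with edge set $X$ and vertex set the vertices incident to $X$. For $k\ge0$, $M_k(G)$ is the matroid on $E(G)$ whose circuits are the inclusion-minimal members of $\{C\subseteq E(G):C\neq\emptyset,\ |C|=|V(G\langle C\rangle)|+k\}$. A matroid on $E$ is trivial if $E$ is a base or a cobase (equivalently it has no circuit or no cocircuit), and non-trivial otherwise. *)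

From mathcomp Require Import all_boot.
Set Implicit Arguments. Unset Strict Implicit. Unset Printing Implicit Defensive.

(* A finite multigraph (loops and parallel edges allowed): vertex type T,
   edge type E, each edge e has two (unordered) ends (ends e).1, (ends e).2;
   a loop has equal ends. *)
Section Graphs.
Variables (T E : finType) (ends : E -> T * T).

Definition incident (e : E) (v : T) : bool := ((ends e).1 == v) || ((ends e).2 == v).

Definition no_isolated : Prop := forall v : T, exists e : E, incident e v.

Definition Vsub (X : {set E}) : {set T} := [set v | [exists e in X, incident e v]].

(* degree of v in G<X>, loops counted twice *)
Definition deg (X : {set E}) (v : T) : nat :=
  #|[set e in X | (ends e).1 == v]| + #|[set e in X | (ends e).2 == v]|.

Definition is_leaf (X : {set E}) (v : T) : Prop :=
  exists e, e \in X /\ [set f in X | incident f v] = [set e] /\ (ends e).1 != (ends e).2.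

Definition adjX (X : {set E}) : rel T :=
  fun u w => [exists e in X, ((ends e == (u, w)) || (ends e == (w, u)))].

Definition has_cycle_component (X : {set E}) : Prop :=
  exists v, v \in Vsub X /\ forall w, connect (adjX X) v w -> deg X w = 2.

(* G<X> is a cacti-graph (no isolated vertices holds by construction of G<X>) *)
Definition cacti (X : {set E}) : Prop :=
  (forall v, v \in Vsub X -> ~ is_leaf X v) /\ ~ has_cycle_component X.

Definition Mk_family (k : nat) (C : {set E}) : bool :=
  (C != set0) && (#|C| == #|Vsub C| + k).

Definition Mk_circuit (k : nat) (C : {set E}) : bool :=
  Mk_family k C && [forall D : {set E}, (D \proper C) ==> ~~ Mk_family k D].
End Graphs.

Section Matroid.
Variables (E : finType) (circ : {set E} -> bool).
Definition indep (I : {set E}) : Prop := forall C : {set E}, C \subset I -> ~~ circ C.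
Definition is_base (B : {set E}) : Prop :=
  indep B /\ forall B' : {set E}, B \subset B' -> indep B' -> B' = B.
Definition is_cobase (B : {set E}) : Prop := is_base (~: B).
Definition trivial_matroid : Prop := is_base setT \/ is_cobase setT.
End Matroid.

(* M_k(G) has a circuit exactly when some edge set X has |X| >= |V(X)| + k, and an
   inclusion-minimal such X is a cacti-graph with Delta X = k: otherwise deleting
   one edge, the edge at a leaf, or a whole cycle component (which has as many
   vertices as edges) leaves a smaller set of the same excess.  So E(G) is a base
   exactly when no such cacti-subgraph exists, while E(G) is never a cobase,
   since for k >= 1 a single edge is independent. *)

From mathcomp Require Import all_boot zify.
Set Implicit Arguments. Unset Strict Implicit. Unset Printing Implicit Defensive.

Lemma card_fibers (I J : finType) (X : {set I}) (A : {set J}) (p : I -> J) :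
  {in X, forall i, p i \in A} -> \sum_(j in A) #|[set i in X | p i == j]| = #|X|.
Proof.
move=> pXA; rewrite -sum1_card (partition_big p (mem A)) //=.
by apply: eq_bigr => j _; rewrite -sum1_card; apply: eq_bigl => i; rewrite inE.
Qed.

Section Multigraph.
Variables (T E : finType) (ends : E -> T * T).
Local Notation V := (Vsub ends).
Local Notation deg := (deg ends).
Local Notation adj := (adjX ends).

Lemma VsubS (X Y : {set E}) : X \subset Y -> V X \subset V Y.
Proof.
move=> sXY; apply/subsetP => v; rewrite !inE => /existsP [e /andP [eX ve]].
by apply/existsP; exists e; rewrite (subsetP sXY).
Qed.

Lemma mem_Vsub (X : {set E}) e v : e \in X -> incident ends e v -> v \in V X.
Proof. by move=> eX ve; rewrite inE; apply/existsP; exists e; rewrite eX. Qed.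

Lemma degS (X Y : {set E}) v : X \subset Y -> deg X v <= deg Y v.
Proof.
move=> sXY; apply: leq_add; apply: subset_leq_card; apply/subsetP => e;
  by rewrite !inE => /andP [/(subsetP sXY) -> ->].
Qed.

Lemma handshake (X : {set E}) : \sum_(v in V X) deg X v = #|X|.*2.
Proof.
rewrite big_split /= -addnn.
by congr (_ + _); apply: card_fibers => e eX; apply: mem_Vsub eX _;
  rewrite /incident eqxx ?orbT.
Qed.

Lemma card_le_Vsub (X : {set E}) :
  {in V X, forall v, deg X v <= 2} -> #|X| <= #|V X|.
Proof.
move=> deg_le2; rewrite -leq_double -handshake -mul2n mulnC -sum_nat_const.
exact: leq_sum.
Qed.

Lemma Vsub_delete_leaf (X : {set E}) e v :
  [set f in X | incident ends f v] = [set e] -> V (X :\ e) \subset V X :\ v.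
Proof.
move=> edges_v; apply/subsetP => w; rewrite inE => /existsP [f /andP [fXe wf]].
move: fXe; rewrite !in_setD1 => /andP [fe fX].
rewrite (mem_Vsub fX wf) andbT; apply: contraNneq fe => wv.
by rewrite -in_set1 -edges_v inE fX -wv.
Qed.

Definition component (X : {set E}) (v : T) : {set E} :=
  [set e in X | connect (adj X) v (ends e).1].

Lemma component_sub (X : {set E}) v : component X v \subset X.
Proof. by apply/subsetP => e; rewrite inE => /andP []. Qed.

Lemma mem_component (X : {set E}) v e w : e \in X -> incident ends e w ->
  (e \in component X v) = connect (adj X) v w.
Proof.
move=> eX /orP [] /eqP <-; rewrite inE eX //=.
have adj12 : adj X (ends e).1 (ends e).2.
  by apply/existsP; exists e; rewrite eX -surjective_pairing eqxx.
have adj21 : adj X (ends e).2 (ends e).1.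
  by apply/existsP; exists e; rewrite eX -surjective_pairing eqxx orbT.
by apply/idP/idP => /connect_trans; apply; apply: connect1.
Qed.

Lemma Vsub_component (X : {set E}) v w :
  w \in V (component X v) -> connect (adj X) v w.
Proof.
rewrite inE => /existsP [e /andP [eC we]].
by rewrite -(mem_component _ (subsetP (component_sub X v) e eC) we).
Qed.

Lemma component_neq0 (X : {set E}) v : v \in V X -> component X v != set0.
Proof.
rewrite inE => /existsP [e /andP [eX ve]].
by apply/set0Pn; exists e; rewrite (mem_component _ eX ve) connect0.
Qed.

Lemma Vsub_delete_component (X : {set E}) v :
  V (X :\: component X v) \subset V X :\: V (component X v).
Proof.
apply/subsetP => w; rewrite inE => /existsP [f /andP [fXC wf]].
move: fXC; rewrite in_setD => /andP [fC fX]; rewrite in_setD.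
rewrite (mem_Vsub fX wf) andbT; apply: contra fC => /Vsub_component.
by rewrite (mem_component _ fX wf).
Qed.

End Multigraph.

Section MinimalExcess.
Variables (T E : finType) (ends : E -> T * T) (k : nat) (X : {set E}).
Local Notation V := (Vsub ends).
Hypothesis k_gt0 : 0 < k.
Hypothesis X_min : minset (fun Y : {set E} => #|V Y| + k <= #|Y|) X.

Lemma minimal_excess_delete (D : {set E}) (W : {set T}) :
  D \subset X -> D != set0 -> W \subset V X -> V (X :\: D) \subset V X :\: W ->
  #|X| + #|W| < #|D| + #|V X| + k.
Proof.
move=> sDX D_neq0 sWVX sVY; rewrite ltnNge; apply: contra_neqN D_neq0 => excess.
suff /setDidPl : X :\: D = X by rewrite -setI_eq0 (setIidPr sDX) => /eqP.
apply: (minsetinf X_min); last exact: subsetDl.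
have := subset_leq_card sVY; rewrite [#|X :\: D|]cardsD [#|_ :\: W|]cardsD.
rewrite (setIidPr sDX) (setIidPr sWVX).
have := subset_leq_card sDX; have := subset_leq_card sWVX; lia.
Qed.

Lemma minimal_excess_card : #|X| = #|V X| + k.
Proof.
have excess := minsetp X_min.
have /set0Pn [e eX] : X != set0 by rewrite -card_gt0; lia.
have := @minimal_excess_delete [set e] set0.
rewrite sub1set eX -card_gt0 cards1 cards0 sub0set setD0 VsubS ?subsetDl //; lia.
Qed.

Lemma minimal_excess_no_leaf v : v \in V X -> ~ is_leaf ends X v.
Proof.
move=> vX [e [eX [edges_v _]]].
have := @minimal_excess_delete [set e] [set v].
rewrite sub1set eX -card_gt0 !cards1 sub1set vX (Vsub_delete_leaf edges_v).
rewrite minimal_excess_card; lia.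
Qed.

Lemma minimal_excess_no_cycle_component : ~ has_cycle_component ends X.
Proof.
move=> [v [vX deg2]]; set C := component ends X v.
have sCX : C \subset X := component_sub ends X v.
have C_le : #|C| <= #|V C|.
  apply: card_le_Vsub => w /Vsub_component /deg2 <-; exact: degS.
have := @minimal_excess_delete C (V C); rewrite minimal_excess_card.
by rewrite sCX component_neq0 // VsubS // Vsub_delete_component; lia.
Qed.

Lemma minimal_excess_cacti : cacti ends X.
Proof.
split; [exact: minimal_excess_no_leaf | exact: minimal_excess_no_cycle_component].
Qed.

End MinimalExcess.

Lemma is_base_setT (E : finType) (circ : {set E} -> bool) :
  indep circ setT -> is_base circ setT.
Proof. by move=> indepT; split=> // B sTB _; apply/eqP; rewrite eqEsubset subsetT. Qed.

Section CircuitsOfMk.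
Variables (T E : finType) (ends : E -> T * T) (k : nat).
Local Notation V := (Vsub ends).
Local Notation circuit := (Mk_circuit ends k).
Hypothesis k_gt0 : 0 < k.

Lemma excess_sub_cacti (X : {set E}) : #|V X| + k <= #|X| ->
  exists2 Y : {set E}, Y \subset X & cacti ends Y /\ #|Y| = #|V Y| + k.
Proof.
move=> X_excess.
have [Y Y_min sYX] :=
  minset_exists (P := fun Y : {set E} => #|V Y| + k <= #|Y|) X_excess.
exists Y => //; split.
  exact: minimal_excess_cacti k_gt0 Y_min.
exact: minimal_excess_card k_gt0 Y_min.
Qed.

Lemma Mk_family_circuit (X : {set E}) :
  Mk_family ends k X -> exists2 C : {set E}, C \subset X & circuit C.
Proof.
move=> X_family.
have [C /minsetP [C_family C_min] sCX] := minset_exists X_family; exists C => //.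
rewrite /Mk_circuit C_family; apply/forallP => D; apply/implyP => sDC.
apply/negP => D_family; move: (sDC).
by rewrite (C_min D D_family (proper_sub sDC)) properxx.
Qed.

Lemma Mk_indep_set1 (e : E) : indep circuit [set e].
Proof.
move=> C; rewrite subset1 => /orP [] /eqP ->; apply/negP => /andP [].
  rewrite /Mk_family cards1 => /andP [_ /eqP card_e] _.
  have : 0 < #|V [set e]|.
    by apply/card_gt0P; exists (ends e).1; apply: (mem_Vsub (set11 e)); rewrite /incident eqxx.
  lia.
by rewrite /Mk_family eqxx.
Qed.

Lemma Mk_not_cobase (e : E) : ~ is_cobase circuit setT.
Proof.
move=> [_ set0_max].
have := set0_max [set e] _ (@Mk_indep_set1 e).
rewrite setCT sub0set => /(_ isT).
by move/setP/(_ e); rewrite !inE eqxx.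
Qed.

End CircuitsOfMk.

Theorem mainTheorem11 (T E : finType) (ends : E -> T * T) (k : nat)
  (Hiso : no_isolated ends) (hk : 1 <= k) :
  trivial_matroid (Mk_circuit ends k) <->
  ~ (exists X : {set E}, cacti ends X /\ #|X| = #|Vsub ends X| + k).
Proof.
split=> [Mk_trivial [X [X_cacti X_card]] | no_cacti].
  have X_family : Mk_family ends k X.
    by rewrite /Mk_family X_card eqxx andbT -card_gt0; lia.
  have [C _ C_circuit] := Mk_family_circuit X_family.
  case: Mk_trivial => [[indepT _] | ].
    by have /negP := indepT C (subsetT C).
  have /set0Pn [e _] : C != set0 by case/andP: C_circuit => /andP [].
  exact: Mk_not_cobase.
left; apply: is_base_setT => C _; apply/negP => /andP [/andP [_ /eqP C_card] _].
have C_excess : #|Vsub ends C| + k <= #|C| by rewrite C_card.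
have [Y _ Y_cacti] := excess_sub_cacti hk C_excess.
by apply: no_cacti; exists Y.
Qed.
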